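(* Let $(X,G)$ be a minimal continuous action and $m\in\mathbb{N}$, $m\geq 2$. If $(X,G)$ is almost $m$-equicontinuous, then $(X,G)$ is $m$-equicontinuous.
   Context: $G$ is a locally compact topological group acting continuously on a compact metric space $(X,d)$; minimal means every orbit is dense. A point $x\in X$ is an $m$-equicontinuity point if for every $\varepsilon>0$ there is $\delta>0$ such that for any $x_1,\dots,x_m$ in the open ball $B_\delta(x)$ and every $g\in G$ there exist $i\neq j$ in $\{1,\dots,m\}$ with $d(gx_i,gx_j)<\varepsilon$; $E^m(X,G)$ is the set of such points. $(X,G)$ is $m$-equicontinuous if $E^m(X,G)=X$, and almost $m$-equicontinuous if $E^m(X,G)$ is residual in $X$. *)

From HB Require Import structures.
From mathcomp Require Import all_boot all_order all_algebra.
From mathcomp Require Import all_classical all_reals all_analysis.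
Set Implicit Arguments. Unset Strict Implicit. Unset Printing Implicit Defensive.
Import Order.TTheory GRing.Theory Num.Theory.
Local Open Scope classical_set_scope.
Local Open Scope ring_scope.

Definition is_topological_group (G : topologicalType)
  (mul : G -> G -> G) (inv : G -> G) (e : G) : Prop :=
  [/\ (forall a b c, mul a (mul b c) = mul (mul a b) c),
      (forall a, mul e a = a /\ mul a e = a),
      (forall a, mul (inv a) a = e /\ mul a (inv a) = e),
      continuous (fun p : G * G => mul p.1 p.2)
    & continuous inv].

Definition is_metric_for (R : realType) (X : topologicalType)
  (d : X -> X -> R) : Prop :=
  [/\ (forall x y, d x y = 0 <-> x = y),
      (forall x y, d x y = d y x),
      (forall x y z, d x z <= d x y + d y z)
    & (forall A : set X,
         open A <-> (forall x, A x -> exists2 r : R, 0 < r &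
                       forall y, d x y < r -> A y))].

Definition is_continuous_action (G X : topologicalType)
  (mul : G -> G -> G) (e : G) (act : G -> X -> X) : Prop :=
  [/\ (forall x, act e x = x),
      (forall g h x, act (mul g h) x = act g (act h x))
    & continuous (fun p : G * X => act p.1 p.2)].

Definition minimal_action (G X : topologicalType) (act : G -> X -> X) : Prop :=
  forall x : X, dense (range (fun g : G => act g x)).

Definition residual (X : topologicalType) (E : set X) : Prop :=
  exists F : nat -> set X,
    (forall n, open (F n) /\ dense (F n)) /\ \bigcap_n F n `<=` E.

Definition m_equicontinuity_point (R : realType) (G X : Type)
  (d : X -> X -> R) (act : G -> X -> X) (m : nat) (x : X) : Prop :=
  forall eps : R, 0 < eps -> exists2 delta : R, 0 < delta &
    forall xs : 'I_m -> X, (forall i, d x (xs i) < delta) ->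
      forall g : G, exists i j : 'I_m,
        i != j /\ d (act g (xs i)) (act g (xs j)) < eps.

Definition Em (R : realType) (G X : Type)
  (d : X -> X -> R) (act : G -> X -> X) (m : nat) : set X :=
  [set x | m_equicontinuity_point d act m x].

Definition m_equicontinuous (R : realType) (G X : Type)
  (d : X -> X -> R) (act : G -> X -> X) (m : nat) : Prop :=
  Em d act m = [set: X].

Definition almost_m_equicontinuous (R : realType) (G : Type) (X : topologicalType)
  (d : X -> X -> R) (act : G -> X -> X) (m : nat) : Prop :=
  residual (Em d act m).

From HB Require Import structures.
From mathcomp Require Import all_boot all_order all_algebra.
From mathcomp Require Import all_classical all_reals all_analysis.
From mathcomp Require Import lra.

Set Implicit Arguments.
Unset Strict Implicit.
Unset Printing Implicit Defensive.
Import Order.TTheory GRing.Theory Num.Theory.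
Local Open Scope classical_set_scope.
Local Open Scope ring_scope.

(* By the Baire category theorem the residual set E^m(X,G) contains some
   point x0.  Take any y.  By minimality some g y lies within delta/2 of x0,
   and by continuity of g so does g z for every z close enough to y.  Given
   points z_1, ..., z_m near y and h in G, apply the m-equicontinuity of x0 to
   the points g z_i and the element h g^-1: two of the points
   h g^-1 (g z_i) = h z_i are eps-close. *)

Section MetricFacts.
Variables (R : realType) (X : topologicalType) (d : X -> X -> R).
Hypothesis d_metric : is_metric_for d.

Lemma metric_self x : d x x = 0.
Proof. by case: d_metric => d0 _ _ _; apply/d0. Qed.

Lemma metric_triangle x y z : d x z <= d x y + d y z.
Proof. by case: d_metric. Qed.

Lemma open_metric_ball x r : open [set y | d x y < r].
Proof.
case: d_metric => _ _ _ openE; apply/openE => z /= dxz.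
exists (r - d x z) => [|y dzy]; first by rewrite subr_gt0.
by have := metric_triangle x z y; lra.
Qed.

Lemma closed_metric_cball x r : closed [set y | d x y <= r].
Proof.
rewrite -openC; case: d_metric => _ dC _ openE; apply/openE => z /= /negP.
rewrite -ltNge => rdxz; exists (d x z - r) => [|y dzy]; first by rewrite subr_gt0.
by apply/negP; rewrite -ltNge; have := metric_triangle x y z; rewrite (dC y z); lra.
Qed.

Lemma metric_ball_nbhs x r : 0 < r -> nbhs x [set y | d x y < r].
Proof.
move=> r_gt0; apply: open_nbhs_nbhs; split; first exact: open_metric_ball.
by rewrite /= metric_self.
Qed.

Lemma nbhs_metric_ball x A : nbhs x A ->
  exists2 r : R, 0 < r & [set y | d x y < r] `<=` A.
Proof.
rewrite nbhsE => -[B [oB Bx] BA]; case: d_metric => _ _ _ openE.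
by have [r r_gt0 rB] := (openE B).1 oB x Bx; exists r => // y /rB /BA.
Qed.

Lemma dense_open_cball_sub (U : set X) x (r : {posnum R}) :
  open U -> dense U ->
  exists (w : X) (s : {posnum R}),
    [set v | d w v <= s%:num] `<=` U `&` [set v | d x v <= r%:num].
Proof.
move=> oU dU.
have [w [dxw Uw]] : [set v | d x v < r%:num / 2] `&` U !=set0.
  by apply: dU; [exists x; rewrite /= metric_self | exact: open_metric_ball].
have [t t_gt0 tU] := nbhs_metric_ball (open_nbhs_nbhs (conj oU Uw)).
have s_gt0 : 0 < Num.min (t / 2) (r%:num / 2) by rewrite lt_min !divr_gt0.
exists w, (PosNum s_gt0) => v /=; rewrite le_min => /andP[dwvt dwvr]; split.
  by apply: tU => /=; lra.
by have := metric_triangle x w v; move: dxw => /=; lra.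
Qed.

End MetricFacts.

Lemma dense_closureT (T : topologicalType) (A : set T) :
  dense A -> closure A = [set: T].
Proof.
move=> dA; apply/seteqP; split => // p _ B.
rewrite nbhsE => -[V [oV Vp] VB].
have [q [Vq Aq]] := dA V (ex_intro _ p Vp) oV.
by exists q; split => //; apply: VB.
Qed.

Lemma compact_nested_closed_meet (T : topologicalType) (C : nat -> set T) :
  compact [set: T] -> (forall n, closed (C n)) ->
  (forall n, C n.+1 `<=` C n) -> (forall n, C n !=set0) ->
  exists p, forall n, C n p.
Proof.
move=> cT clC C_dec C_ne.
have C_mono n k : (n <= k)%N -> C k `<=` C n.
  elim: k => [|k IHk]; first by rewrite leqn0 => /eqP ->.
  rewrite leq_eqVlt ltnS => /orP[/eqP -> //|/IHk]; exact: subset_trans.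
have CF : ProperFilter (filter_from [set: nat] C).
  apply: filter_from_proper => [|n _]; last exact: C_ne.
  apply: filter_from_filter; first by exists 0%N.
  move=> i j _ _; exists (maxn i j) => // w Cw.
  by split; [apply: (C_mono i) Cw; rewrite leq_maxl | apply: (C_mono j) Cw; rewrite leq_maxr].
have [p [_ clusterp]] := cT _ CF (ex_intro2 _ _ 0%N I (fun _ _ => I)).
by exists p => n; apply: clC => B nB; apply: clusterp => //; exists n.
Qed.

(* The point [x] only witnesses that [X] is nonempty; it starts the nested
   sequence of closed balls. *)
Lemma compact_metric_residual_nonempty (R : realType) (X : topologicalType)
    (d : X -> X -> R) (x : X) (E : set X) :
  is_metric_for d -> compact [set: X] -> residual E -> E !=set0.
Proof.
move=> d_metric cX [F [odF FE]].
pose cball (c : X * {posnum R}) := [set v | d c.1 v <= c.2%:num].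
have step nc : exists c : X * {posnum R}, cball c `<=` F nc.1 `&` cball nc.2.
  have [oF dF] := odF nc.1.
  by have [w [s ws]] := dense_open_cball_sub d_metric nc.2.1 nc.2.2 oF dF; exists (w, s).
have [next nextP] := choice step.
pose c := fix c n := if n is k.+1 then next (k, c k) else (x, PosNum (@ltr01 R)).
have [p Cp] : exists p, forall n, cball (c n) p.
  apply: compact_nested_closed_meet => // [n|n|n].
  - exact: closed_metric_cball.
  - by move=> v /(nextP (n, c n)) [].
  - by exists (c n).1; rewrite /cball /= metric_self.
by exists p; apply: FE => n _; have [] := nextP (n, c n) p (Cp n.+1).
Qed.

Section EquicontinuityTransfer.
Variables (R : realType) (G : Type) (X : topologicalType).
Variables (d : X -> X -> R) (act : G -> X -> X) (m : nat).
Hypothesis d_metric : is_metric_for d.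
Hypothesis act_continuous : forall g, continuous (act g).
Hypothesis act_factor : forall g h, exists k, forall z, act k (act g z) = act h z.

Lemma m_equicontinuity_point_orbit_closure x0 y :
  m_equicontinuity_point d act m x0 ->
  closure (range (act^~ y)) x0 -> m_equicontinuity_point d act m y.
Proof.
move=> Ex0 x0_orbit eps eps_gt0.
have [delta delta_gt0 Hdelta] := Ex0 eps eps_gt0.
have half_gt0 : 0 < delta / 2 by rewrite divr_gt0.
have [_ [[g _ <-] dx0gy]] := x0_orbit _ (metric_ball_nbhs d_metric x0 half_gt0).
have [r r_gt0 rH] := nbhs_metric_ball d_metric
  (act_continuous (metric_ball_nbhs d_metric (act g y) half_gt0)).
exists r => // xs dyxs h.
have near_x0 i : d x0 (act g (xs i)) < delta.
  have := rH _ (dyxs i); have := metric_triangle d_metric x0 (act g y) (act g (xs i)).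
  by move: dx0gy => /=; lra.
have [k kgh] := act_factor g h.
have [i [j [ij dij]]] := Hdelta (act g \o xs) near_x0 k.
by exists i, j; rewrite -!kgh.
Qed.

End EquicontinuityTransfer.

Theorem proposition4p5 (R : realType) (G X : topologicalType)
  (mul : G -> G -> G) (inv : G -> G) (e : G)
  (d : X -> X -> R) (act : G -> X -> X) (m : nat) :
  is_topological_group mul inv e ->
  hausdorff_space G -> locally_compact [set: G] ->
  is_metric_for d -> compact [set: X] ->
  is_continuous_action mul e act ->
  minimal_action act ->
  (2 <= m)%N ->
  almost_m_equicontinuous d act m ->
  m_equicontinuous d act m.
Proof.
(* Neither the topology of G nor m >= 2 plays any role. *)
move=> [_ _ mulV _ _] _ _ d_metric cX [act1 actM act_cont] minimal _ resEm.
apply/seteqP; split => // y _.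
have [x0 Emx0] := compact_metric_residual_nonempty y d_metric cX resEm.
apply: (m_equicontinuity_point_orbit_closure d_metric _ _ Emx0).
- exact: (continuous_curry act_cont).2.
- move=> g h; exists (mul h (inv g)) => z.
  by rewrite actM -(actM (inv g)) (mulV g).1 act1.
- by rewrite dense_closureT.
Qed.
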